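(* The language $\{\,a^mb^{2^m}\mid m\ge1\,\}$ belongs to $\mathscr{L}_{rt}(\mathrm{SC\text{-}OCA}(n))$, i.e., it is accepted by a real-time one-way cellular automaton whose total number of communications on accepted inputs $w$ is $O(|w|)$.
   Context: A CA is $\langle S,F,A,B,\#,b_l,b_r,\delta\rangle$ with states $S$, accepting states $F$, input alphabet $A\subseteq S$, communication symbols $B$, boundary $\#\notin B$, communication functions $b_l,b_r:S\to B\cup\{\bot\}$ ($\bot$: nothing sent), local transition $\delta:(B\cup\{\#,\bot\})\times S\times(B\cup\{\#,\bot\})\to S$; cells $1..|w|$ start with the input letters and update synchronously by $c_{t+1}(i)=\delta(b_r(c_t(i-1)),c_t(i),b_l(c_t(i+1)))$, outer cells getting $\#$ once at the first step and $\bot$ afterwards. Acceptance: leftmost cell enters $F$. Real time: accepted inputs accepted within $|w|$ steps. OCA: $b_r\equiv\bot$ and the leftmost cell gets no boundary symbol. $\mathrm{com}(i,t)$: number of steps $j<t$ with $b_r(c_j(i))\ne\bot$ or $b_l(c_j(i+1))\ne\bot$; $\mathrm{scom}(w)=\sum_{i=1}^{|w|-1}\mathrm{com}(i,t(|w|))$ with $t$ the time complexity. $\mathrm{SC\text{-}OCA}(f)$: OCAs such that every accepted $w$ is accepted with $\mathrm{scom}(w)\le g(|w|)$ for some $g\in O(f)$. *)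

From mathcomp Require Import all_boot.
Unset Printing Implicit Defensive.

(* Symbols a cell may receive from a neighbour: nothing (bot),
   the boundary symbol #, or a communication symbol of B. *)
Inductive msg (B : Type) := MBot | MBound | MSym of B.
Arguments MSym {B}.
Arguments MBot {B}. Arguments MBound {B}.

Definition of_opt {B : Type} (o : option B) : msg B :=
  if o is Some b then MSym b else MBot.

(* Cellular automaton <S,F,A,B,#,b_l,b_r,delta> over the input alphabet
   {a,b}, encoded as bool (a = false, b = true); A ⊆ S is modelled by an
   injective embedding inp.  None in b_l/b_r stands for bot. *)
Record CA := MkCA {
  St : finType;
  Com : finType;
  acc : pred St;
  inp : bool -> St;
  inp_inj : injective inp;
  bl : St -> option Com;
  br : St -> option Com;
  delta : msg Com -> St -> msg Com -> St
}.

Definition is_OCA (M : CA) : Prop := forall s, br M s = None.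

(* Configuration of M (run as an OCA if oca = true, i.e. the leftmost cell
   gets no boundary symbol) on input w at time t; cells are 1..|w|. *)
Fixpoint conf (M : CA) (oca : bool) (w : seq bool) (t : nat) : nat -> St M :=
  match t with
  | 0 => fun i => inp M (nth false w i.-1)
  | t'.+1 =>
      let c := conf M oca w t' in
      let n := size w in
      fun i =>
        let l := if i == 1 then (if (~~ oca) && (t' == 0) then MBound else MBot)
                 else of_opt (br M (c i.-1)) in
        let r := if i == n then (if t' == 0 then MBound else MBot)
                 else of_opt (bl M (c i.+1)) in
        delta M l (c i) r
  end.

Definition oconf (M : CA) := conf M true.

Definition accepted_at (M : CA) (w : seq bool) (t : nat) : Prop :=
  0 < size w /\ acc M (oconf M w t 1).

Definition accepts (M : CA) (w : seq bool) : Prop := exists t, accepted_at M w t.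

Definition real_time (M : CA) : Prop :=
  forall w, accepts M w -> exists2 t, t <= size w & accepted_at M w t.

Definition com (M : CA) (w : seq bool) (i t : nat) : nat :=
  count (fun j => (br M (oconf M w j i) != None) || (bl M (oconf M w j i.+1) != None))
        (iota 0 t).

(* scom(w), with time complexity t(n) = n (real time) *)
Definition scom (M : CA) (w : seq bool) : nat :=
  \sum_(1 <= i < size w) com M w i (size w).

Definition SC_linear (M : CA) : Prop :=
  exists c n0, forall w, accepts M w -> n0 <= size w -> scom M w <= c * size w.

Definition Lang (w : seq bool) : Prop :=
  exists2 m, 1 <= m & w = nseq m false ++ nseq (2 ^ m) true.

From HB Require Import structures.
From mathcomp Require Import all_boot zify.
Set Implicit Arguments. Unset Strict Implicit.

(* In an OCA information flows only leftwards, so the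
   evolution of a cell depends only on the suffix of the input starting
   there (lemma [oconf_drop]).  Counting a-cells from the right by
   d = 0, 1, ...:
   - the b-block b^N emits an "end" signal that walks left one cell per
     step, reaching the d-th a-cell at time N + d + 1;
   - the rightmost a-cell (d = 0) sends a pulse at every step; every other
     a-cell forwards every second pulse it receives, so cell d pulses
     exactly at the times d + k * 2^d, k >= 1 (lemma [pulse_times]);
   - the leftmost a-cell accepts when the end signal arrives one step after
     the 4th pulse of its right neighbour; with m a-cells this means
     N = 2^m, and happens exactly at time m + N (for m = 1 a clock is used).
   Each b-cell speaks at most twice, and a-cell d at most 2 + n / 2^d times,
   so the communications form a geometric series bounded by 4n. *)

Section OneWayLocality.
Variable M : CA.
Hypothesis oneway : is_OCA M.

Lemma oconf_drop t w i : i < size w -> oconf M w t i.+1 = oconf M (drop i w) t 1.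
Proof.
elim: t w i => [|t IH] w i iw; first by rewrite /oconf /= nth_drop addn0.
have right_nbr : i.+1 < size w -> oconf M w t i.+2 = oconf M (drop i w) t 2.
  move=> iw1; rewrite IH // (IH (drop i w) 1) ?drop_drop // size_drop; lia.
move: right_nbr (IH w i iw); rewrite /oconf /= !oneway /= !if_same size_drop.
have -> : (1 == size w - i) = (i.+1 == size w) by apply/eqP/eqP; lia.
by case: ltngtP => [_ -> // -> // | | _ _ -> //]; rewrite ltnS leqNgt iw.
Qed.

Lemma oconf_leftmost_step t u : 0 < size u ->
  oconf M u t.+1 1 = delta M MBot (oconf M u t 1)
    (if size u == 1 then (if t == 0 then MBound else MBot)
     else of_opt (bl M (oconf M (behead u) t 1))).
Proof.
move=> u_gt0; rewrite [LHS]/oconf /= eq_sym; case: ifP => // not_single.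
by rewrite -/(oconf M u t 2) (@oconf_drop t u 1) ?drop1 // ltn_neqAle eq_sym not_single.
Qed.
End OneWayLocality.

(* States: initial a/b cells, b-cells waiting for / emitting / after the end
   signal, a dead a-cell, the rightmost a-cell (clock saturating at 3, end
   flag, accept flag) and the other a-cells (parity of pulses received,
   pulse counter saturating at 5, pulse-just-received, end flag, accept). *)
Inductive state :=
  | AIn | BIn | BWait | BEnd | BDone | ADone
  | ALast of 'I_4 & bool & bool
  | AInner of bool & 'I_6 & bool & bool & bool.

Definition state_code :=
  (('I_6 + ('I_4 * bool * bool)) + (bool * 'I_6 * bool * bool * bool))%type.

Definition encode (s : state) : state_code :=
  match s with
  | AIn => inl (inl (@Ordinal 6 0 erefl))
  | BIn => inl (inl (@Ordinal 6 1 erefl))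
  | BWait => inl (inl (@Ordinal 6 2 erefl))
  | BEnd => inl (inl (@Ordinal 6 3 erefl))
  | BDone => inl (inl (@Ordinal 6 4 erefl))
  | ADone => inl (inl (@Ordinal 6 5 erefl))
  | ALast c e a => inl (inr (c, e, a))
  | AInner p c j e a => inr (p, c, j, e, a)
  end.

Definition decode (x : state_code) : option state :=
  match x with
  | inl (inl k) =>
      nth None [:: Some AIn; Some BIn; Some BWait; Some BEnd; Some BDone; Some ADone] k
  | inl (inr (c, e, a)) => Some (ALast c e a)
  | inr (p, c, j, e, a) => Some (AInner p c j e a)
  end.

Lemma encodeK : pcancel encode decode. Proof. by case. Qed.
HB.instance Definition _ := Finite.copy state (pcan_type encodeK).

(* Signals: inl x announces the input letter x (sent at time 0 only);
   inr (p, e) carries a pulse if p and the end signal if e. *)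
Definition signal := (bool + (bool * bool))%type.

Definition end_in (r : msg signal) : bool := if r is MSym (inr (_, e)) then e else false.
Definition pulse_in (r : msg signal) : bool := if r is MSym (inr (p, _)) then p else false.

Definition step (l : msg signal) (s : state) (r : msg signal) : state :=
  match s with
  | AIn => match r with
           | MSym (inl true) => ALast (inord 1) false false
           | MSym (inl false) => AInner false (inord 0) false false false
           | _ => ADone end
  | BIn => match r with
           | MBound => BEnd
           | MSym (inl true) => BWait
           | _ => BDone end
  | BWait => if end_in r then BEnd else BWait
  | BEnd => BDone
  | BDone => BDone
  | ADone => ADone
  | ALast clock _ _ => ALast (inord (minn clock.+1 3)) (end_in r) (end_in r && (val clock == 2))
  | AInner par cnt got_pulse _ _ =>
      AInner (par (+) pulse_in r) (if pulse_in r then inord (minn cnt.+1 5) else cnt)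
             (pulse_in r) (end_in r) [&& end_in r, val cnt == 4 & got_pulse]
  end.

(* An inner a-cell forwards a received pulse when it is an even-numbered one. *)
Definition send (s : state) : option signal :=
  match s with
  | AIn => Some (inl false)
  | BIn => Some (inl true)
  | BEnd => Some (inr (false, true))
  | ALast _ e _ => Some (inr (true, e))
  | AInner par _ got_pulse e _ =>
      let forward := got_pulse && ~~ par in
      if forward || e then Some (inr (forward, e)) else None
  | _ => None
  end.

Definition accepting (s : state) : bool :=
  match s with ALast _ _ acc => acc | AInner _ _ _ _ acc => acc | _ => false end.

Definition input (x : bool) : state := if x then BIn else AIn.

Lemma input_inj : injective input. Proof. by do 2 case. Qed.

Definition Mpow : CA :=
  @MkCA state (signal : finType) accepting input input_inj send (fun _ => None) step.

Lemma Mpow_oneway : is_OCA Mpow. Proof. by []. Qed.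

Definition leftmost (w : seq bool) (t : nat) : state := oconf Mpow w t 1.

Lemma leftmost_step u t : 0 < size u -> leftmost u t.+1 = step MBot (leftmost u t)
  (if size u == 1 then (if t == 0 then MBound else MBot)
   else of_opt (send (leftmost (behead u) t))).
Proof. exact: (@oconf_leftmost_step Mpow Mpow_oneway t u). Qed.

Lemma leftmost_drop w i t : i < size w -> oconf Mpow w t i.+1 = leftmost (drop i w) t.
Proof. exact: (@oconf_drop Mpow Mpow_oneway t w i). Qed.

(* Behaviour of a suffix starting with b: only a genuine final block b^N
   produces the end signal, which leaves its leftmost cell at time N. *)
Definition is_b_block (u : seq bool) : bool := (u != [::]) && all (pred1 true) u.

Lemma b_block_nseq u : is_b_block u -> u = nseq (size u) true.
Proof. by case/andP=> _ /all_pred1P. Qed.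

Lemma nseq_b_block N : 0 < N -> is_b_block (nseq N true).
Proof.
by case: N => // N _; apply/all_pred1P; rewrite size_nseq.
Qed.

Definition b_state (u : seq bool) (t : nat) : state :=
  if t == 0 then BIn else
  if is_b_block u then (if t < size u then BWait else if t == size u then BEnd else BDone)
  else if head true (behead u) then BWait else BDone.

Definition b_signal (u : seq bool) (t : nat) : option signal :=
  if t == 0 then Some (inl true) else
  if is_b_block u && (t == size u) then Some (inr (false, true)) else None.

Lemma send_b_state u t : send (b_state u t) = b_signal u t.
Proof.
rewrite /b_state /b_signal; case: eqP => // _.
case: (is_b_block u) => /=; last by case: ifP.
by case: ltngtP.
Qed.

Lemma leftmost_b u t : leftmost (true :: u) t = b_state (true :: u) t.
Proof.
elim: u t => [|x u IHu] t.
  elim: t => [|t IH] //; rewrite leftmost_step // IH /b_state /=.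
  by case: t {IH} => [|[|t]].
case: x IHu => IHu; elim: t => [|t IH] //; rewrite leftmost_step // IH /=; last first.
  by rewrite /b_state /is_b_block /=; case: t {IH}.
rewrite IHu send_b_state /b_state /b_signal /is_b_block /=.
case: t {IH} => [|t] /=; first by case: (all _ _).
case: (all (pred1 true) u) => //=.
rewrite !ltnS !eqSS.
by case: (ltngtP t (size u)) => // _; case: (_ == _).
Qed.

(* pulse d s: the a-cell at distance d from the rightmost a-cell emits a
   pulse at time s (when b's follow). *)
Fixpoint pulse (d s : nat) : bool :=
  if d is d'.+1 then
    [&& 0 < s, pulse d' s.-1 & ~~ odd (count (pulse d') (iota 0 s))]
  else 0 < s.

Lemma pulse_at0 d : pulse d 0 = false. Proof. by case: d. Qed.

Lemma count_iotaS (a : pred nat) t : count a (iota 0 t.+1) = count a (iota 0 t) + a t.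
Proof. by rewrite -addn1 iotaD count_cat /= addn0. Qed.

Lemma count_pulse0 s : count (pulse 0) (iota 0 s.+1) = s.
Proof. by elim: s => [|s IH] //; rewrite count_iotaS IH addn1. Qed.

Lemma count_pulseS d t :
  count (pulse d.+1) (iota 0 t.+1) = (count (pulse d) (iota 0 t))./2.
Proof.
elim: t => [|t IH] //.
rewrite count_iotaS IH [in RHS]count_iotaS.
have -> : pulse d.+1 t.+1 = pulse d t && ~~ odd (count (pulse d) (iota 0 t.+1)) by [].
rewrite count_iotaS; case: (pulse d t) => /=; rewrite ?addn0 ?addn1 //.
by rewrite -uphalfE uphalf_half addnC /= negbK.
Qed.

Lemma count_pulse_halves d t :
  2 * count (pulse d.+1) (iota 0 t) <= count (pulse d) (iota 0 t).
Proof.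
apply: (@leq_trans (2 * count (pulse d.+1) (iota 0 t.+1))).
  by rewrite leq_mul2l count_iotaS leq_addr orbT.
by rewrite count_pulseS mul2n halfK leq_subr.
Qed.

Lemma pulse_times d k s : 0 < k ->
  (pulse d s && (count (pulse d) (iota 0 s.+1) == k)) = (s == d + k * 2 ^ d).
Proof.
elim: d k s => [|d IH] k s k_gt0.
  rewrite count_pulse0 expn0 muln1 add0n /=.
  by case: (s =P k) => [->|_]; rewrite ?k_gt0 ?andbF.
case: s => [|s]; first by rewrite pulse_at0 /= addSn.
rewrite count_pulseS /= -andbA.
have -> : ~~ odd (count (pulse d) (iota 0 s.+1)) && ((count (pulse d) (iota 0 s.+1))./2 == k)
          = (count (pulse d) (iota 0 s.+1) == k.*2).
  set c := count _ _; case c_odd: (odd c) => /=.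
    by apply/esym/negbTE; apply: contraTneq c_odd => ->; rewrite odd_double.
  by rewrite -(inj_eq (can_inj doubleK)) even_halfK ?c_odd.
rewrite IH ?double_gt0 //.
by rewrite addSn eqSS expnS -mul2n mulnCA mulnA.
Qed.

(* Behaviour of the leftmost cell of a^(d+1) v, where v is empty or starts
   with b: its outgoing pulses, end signal, and full state. *)
Definition a_pulse (d : nat) (v : seq bool) (s : nat) : bool := (v != [::]) && pulse d s.
Definition a_end (d : nat) (v : seq bool) (s : nat) : bool :=
  is_b_block v && (s == size v + d.+1).
Definition b_end (v : seq bool) (s : nat) : bool := is_b_block v && (s == size v).
Definition pulses_before (d : nat) (v : seq bool) (t : nat) : nat :=
  count (a_pulse d v) (iota 0 t).

Definition a_signal (d : nat) (v : seq bool) (s : nat) : option signal :=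
  if s == 0 then Some (inl false) else
  if a_pulse d v s || a_end d v s then Some (inr (a_pulse d v s, a_end d v s)) else None.

Definition a_state (d : nat) (v : seq bool) (t : nat) : state :=
  if t == 0 then AIn else
  match d with
  | 0 => if v == [::] then ADone
         else ALast (inord (minn t 3)) (b_end v t.-1) (b_end v t.-1 && (t == 3))
  | d'.+1 =>
      AInner (odd (pulses_before d' v t)) (inord (minn (pulses_before d' v t) 5))
             (a_pulse d' v t.-1) (a_end d' v t.-1)
             [&& a_end d' v t.-1, 1 < t, minn (pulses_before d' v t.-1) 5 == 4
               & a_pulse d' v t.-2]
  end.

Lemma send_a_state d v t : send (a_state d v t) = a_signal d v t.
Proof.
rewrite /a_state /a_signal; case: t => [|t] //=.
case: d => [|d]; case: v => [|x v] //=; first by rewrite /b_end /a_end addn1 eqSS.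
by have -> : a_end d (x :: v) t = a_end d.+1 (x :: v) t.+1 by rewrite /a_end !addnS eqSS.
Qed.

Lemma pulse_in_a_signal d v s : pulse_in (of_opt (a_signal d v s.+1)) = a_pulse d v s.+1.
Proof. by rewrite /a_signal /=; case: (a_pulse d v s.+1); case: (a_end d v s.+1). Qed.

Lemma end_in_a_signal d v s : end_in (of_opt (a_signal d v s.+1)) = a_end d v s.+1.
Proof. by rewrite /a_signal /=; case: (a_pulse d v s.+1); case: (a_end d v s.+1). Qed.

Lemma pulses_beforeS d v t : pulses_before d v t.+1 = pulses_before d v t + a_pulse d v t.
Proof. exact: count_iotaS. Qed.

Lemma leftmost_a_last v : head true v -> forall t, leftmost (false :: v) t = a_state 0 v t.
Proof.
case: v => [_|[] v //= _]; first by elim=> [|t IH] //; rewrite leftmost_step // IH /=; case: t {IH}.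
elim=> [|t IH] //; rewrite leftmost_step // IH /= leftmost_b send_b_state.
case: t {IH} => [|t] //=; first by rewrite /a_state /b_end /= andbF.
have -> : end_in (of_opt (b_signal (true :: v) t.+1)) = b_end (true :: v) t.+1.
  by rewrite /b_signal /b_end /=; case: (_ && _).
rewrite /a_state /= inordK ?ltnS ?geq_minr //.
by case: t => [|[|t]].
Qed.

Lemma leftmost_a d v : head true v -> forall t, leftmost (nseq d.+1 false ++ v) t = a_state d v t.
Proof.
move=> v_shape; elim: d => [|d IHd] t; first exact: leftmost_a_last.
elim: t => [|t IH] //; rewrite leftmost_step ?size_cat ?size_nseq // IH /= IHd send_a_state.
case: t {IH} => [|t].
  rewrite /a_state /= /pulses_before /= /a_pulse pulse_at0 andbF /a_end addnS /=.
  by case: (is_b_block v).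
rewrite /a_state [in step _ _ _]/= pulse_in_a_signal end_in_a_signal.
rewrite inordK ?ltnS ?geq_minr // /= (pulses_beforeS d v t.+1).
have min_sat c : minn (minn c 5).+1 5 = minn c.+1 5 by rewrite -minnSS -minnA.
by case: (a_pulse d v t.+1) => /=; rewrite ?addn1 ?addn0 ?min_sat ?addbT ?addbF.
Qed.

(* The words of the language, indexed by m - 1. *)
Definition word (d : nat) : seq bool := nseq d.+1 false ++ nseq (2 ^ d.+1) true.

Lemma Lang_word w : Lang w <-> exists d, w = word d.
Proof. by split=> [[[|d]] // _ ->|[d ->]]; [exists d | exists d.+1]. Qed.

Lemma leftmost_word d t : leftmost (word d) t = a_state d (nseq (2 ^ d.+1) true) t.
Proof. by rewrite leftmost_a //; case: (2 ^ _). Qed.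

Lemma a_prefix_split w : head true w = false ->
  exists d v, w = nseq d.+1 false ++ v /\ head true v.
Proof.
elim: w => [|x w IH] //= ->.
case: w IH => [|[] w] IH; [by exists 0, [::] | by exists 0, (true :: w)|].
by have [d [v [-> v_shape]]] := IH erefl; exists d.+1, v.
Qed.

Lemma a_state_accepting d v t : accepting (a_state d v t) ->
  v = nseq (2 ^ d.+1) true /\ t = d.+1 + 2 ^ d.+1.
Proof.
rewrite /a_state; case: t => [|t] //=.
case: d => [|d].
  case: eqP => // _ /= /andP[/andP[v_b /eqP end_t] /eqP [t2]].
  by rewrite (b_block_nseq v_b) -end_t t2.
case/and4P=> /andP[v_b /eqP end_t] _ cnt4.
case: t end_t cnt4 => [|s] // end_t cnt4 /andP[v_nil pulse_s].
have count4 : count (pulse d) (iota 0 s.+1) == 4.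
  have min_eq4 c : (minn c 5 == 4) = (c == 4) by case: c => [|[|[|[|[|[|c]]]]]].
  by move: cnt4; rewrite min_eq4 /pulses_before /a_pulse v_nil.
have /esym/eqP s_eq := pulse_times d s (isT : 0 < 4); rewrite pulse_s count4 in s_eq.
have size_v : size v = 2 ^ d.+2.
  by apply/eqP; rewrite -(eqn_add2r d.+1) -end_t s_eq !expnS mulnA addnS addnC.
split; first by rewrite (b_block_nseq v_b) size_v.
by rewrite s_eq !expnS mulnA !addSn.
Qed.

(* Completeness: the end signal indeed arrives right after the 4th pulse. *)
Lemma a_state_accepts d : accepting (a_state d (nseq (2 ^ d.+1) true) (d.+1 + 2 ^ d.+1)).
Proof.
case: d => [|d] //; set v := nseq _ _.
have v_b : is_b_block v by rewrite nseq_b_block // expn_gt0.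
have pow4 : 2 ^ d.+2 = 4 * 2 ^ d by rewrite !expnS mulnA.
have := pulse_times d (d + 4 * 2 ^ d) (isT : 0 < 4); rewrite eqxx => /andP[pulse_s count4].
have v_nil : v != [::] by case/andP: v_b.
rewrite /a_state !addSn /= /a_end v_b size_nseq /a_pulse v_nil pow4 pulse_s /=.
have -> : pulses_before d v (d + 4 * 2 ^ d).+1 = 4.
  by apply/eqP; rewrite /pulses_before /a_pulse v_nil.
by rewrite addnC addnS eqxx.
Qed.

Lemma b_state_rejects u t : accepting (b_state u t) = false.
Proof. by rewrite /b_state; repeat case: ifP. Qed.

Lemma accepted_word w t : accepted_at Mpow w t -> exists d, w = word d /\ t = size w.
Proof.
case: w => [[]//|[] w [_]]; rewrite -/(leftmost _ _); first by rewrite leftmost_b /= b_state_rejects.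
have [d [v [-> v_shape]]] := @a_prefix_split (false :: w) erefl.
rewrite leftmost_a // => /a_state_accepting [-> ->].
by exists d; rewrite /word size_cat !size_nseq.
Qed.

Lemma word_accepted d : accepted_at Mpow (word d) (size (word d)).
Proof.
split; first by rewrite /word size_cat size_nseq.
rewrite -/(leftmost _ _) leftmost_word /word size_cat !size_nseq; exact: a_state_accepts.
Qed.

Lemma count_or3 (T : Type) (a b c : pred T) s :
  count (fun x => [|| a x, b x | c x]) s <= count a s + count b s + count c s.
Proof.
elim: s => [|x s IH] //=.
have : [|| a x, b x | c x] <= a x + b x + c x by case: (a x); case: (b x); case: (c x).
lia.
Qed.

Lemma count_pred1_iota k n : count (pred1 k) (iota 0 n) <= 1.
Proof. by rewrite (count_uniq_mem _ (iota_uniq 0 n)) leq_b1. Qed.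

(* An a-cell speaks at time 0, when it pulses, and when passing the end signal. *)
Lemma a_signals_bound d v n :
  count (fun j => send (a_state d v j) != None) (iota 0 n) <= 2 + count (pulse d) (iota 0 n).
Proof.
apply: (@leq_trans (count (fun j => [|| j == 0, pulse d j | j == size v + d.+1]) (iota 0 n))).
  apply: sub_count => j /=; rewrite send_a_state /a_signal /a_pulse /a_end.
  by case: (j == 0); case: (pulse d j); case: (j == _); case: (v != [::]); case: (is_b_block v).
apply: leq_trans (count_or3 _ _ _ _) _; rewrite addnAC leq_add2r.
exact: leq_add (count_pred1_iota 0 n) (count_pred1_iota (size v + d.+1) n).
Qed.

(* A b-cell speaks at time 0 and possibly once more with the end signal. *)
Lemma b_signals_bound u n : count (fun j => send (b_state u j) != None) (iota 0 n) <= 2.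
Proof.
apply: (@leq_trans (count (fun j => [|| j == 0, false | j == size u]) (iota 0 n))).
  apply: sub_count => j /=; rewrite send_b_state /b_signal.
  by case: (j == 0) => //=; case: (is_b_block u); case: (j == _).
apply: leq_trans (count_or3 _ _ _ _) _; rewrite count_pred0 addn0.
exact: leq_add (count_pred1_iota 0 n) (count_pred1_iota (size u) n).
Qed.

Lemma geometric_sum (g : nat -> nat) D : (forall d, 2 * g d.+1 <= g d) ->
  \sum_(0 <= d < D) g d <= 2 * g 0.
Proof.
elim: D g => [|D IH] g halves; first by rewrite big_geq.
rewrite big_nat_recl //.
apply: (@leq_trans (g 0 + 2 * g 1)); first by rewrite leq_add2l IH.
by rewrite [2 * g 0]mul2n -addnn leq_add2l halves.
Qed.

(* com(i) counts the messages sent by cell i+1 (the OCA has no rightward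
   messages), i.e. by the leftmost cell of the suffix drop i (word d). *)
Lemma com_cell_bound d i : 0 < i < size (word d) ->
  com Mpow (word d) i (size (word d)) <=
  2 + (if i < d.+1 then count (pulse (d.+1 - i.+1)) (iota 0 (size (word d))) else 0).
Proof.
move=> /andP[i_gt0 i_lt].
rewrite /com (@eq_count _ _ (fun j => send (leftmost (drop i (word d)) j) != None)); last first.
  by move=> j /=; rewrite leftmost_drop.
rewrite /word drop_cat size_nseq; case: ifP => i_in_a.
  rewrite drop_nseq -subnSK //.
  apply: leq_trans (a_signals_bound (d.+1 - i.+1) (nseq (2 ^ d.+1) true) _).
  by apply: eq_leq; apply: eq_count => j; rewrite leftmost_a //; case: (2 ^ _).
have : 0 < 2 ^ d.+1 - (i - d.+1).
  by move: i_lt i_in_a; rewrite /word size_cat !size_nseq; lia.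
rewrite drop_nseq; case: (2 ^ d.+1 - (i - d.+1)) => // k _.
apply: leq_trans (b_signals_bound (true :: nseq k true) _).
by apply: eq_leq; apply: eq_count => j; rewrite /= leftmost_b.
Qed.

(* The pulses of all a-cells form a geometric series dominated by 2n. *)
Lemma a_cells_pulse_bound d n :
  \sum_(0 <= i < d.+1) count (pulse (d.+1 - i.+1)) (iota 0 n) <= 2 * n.
Proof.
rewrite big_nat_rev /=.
rewrite (@eq_big_nat _ _ _ 0 d.+1 _ (fun e => count (pulse e) (iota 0 n))); last first.
  by move=> e /andP[_ e_lt]; rewrite add0n subnSK // subKn // ltnW.
apply: leq_trans (@geometric_sum (fun e => count (pulse e) (iota 0 n)) d.+1
                   (fun e => count_pulse_halves e n)) _.
by rewrite leq_mul2l (leq_trans (count_size _ _)) ?size_iota ?orbT.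
Qed.

Lemma scom_word d : scom Mpow (word d) <= 4 * size (word d).
Proof.
rewrite /scom; set n := size (word d).
have a_len : d.+1 <= n by rewrite /n /word size_cat size_nseq leq_addr.
pose f i := if i < d.+1 then count (pulse (d.+1 - i.+1)) (iota 0 n) else 0.
apply: (@leq_trans (\sum_(1 <= i < n) (2 + f i))).
  rewrite big_nat_cond [X in _ <= X]big_nat_cond; apply: leq_sum => i /andP[i_range _].
  exact: com_cell_bound.
apply: (@leq_trans (\sum_(0 <= i < n) (2 + f i))).
  by rewrite [X in _ <= X](@big_ltn _ _ _ 0 n) ?leq_addl //; lia.
rewrite big_split /= sum_nat_const_nat subn0 mulnC -[4]/(2 + 2) mulnDl leq_add2l.
have f_on_b_cells : \sum_(d.+1 <= i < n) f i = 0.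
  by rewrite big_nat_cond big1 // => i /andP[/andP[i_ge _] _]; rewrite /f ltnNge i_ge.
rewrite (@big_cat_nat _ _ _ d.+1) //= f_on_b_cells addn0.
rewrite (@eq_big_nat _ _ _ 0 d.+1 _ (fun i => count (pulse (d.+1 - i.+1)) (iota 0 n))).
  exact: a_cells_pulse_bound.
by move=> i /andP[_ i_lt]; rewrite /f i_lt.
Qed.

Theorem mainTheorem7 :
  exists M : CA,
    [/\ is_OCA M,
        (forall w, Lang w <-> accepts M w),
        real_time M
      & SC_linear M].
Proof.
exists Mpow; split.
- exact: Mpow_oneway.
- move=> w; rewrite Lang_word; split=> [[d ->]|[t /accepted_word [d [-> _]]]].
    by exists (size (word d)); apply: word_accepted.
  by exists d.
- move=> w [t acc_t]; exists t => //.
  by have [d [_ ->]] := accepted_word acc_t.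
- exists 4, 0 => w [t /accepted_word [d [-> _]]] _.
  exact: scom_word.
Qed.
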